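(* Let $F\in\{\mathbb{R},\mathbb{C}\}$. (1) Let $\Theta$ satisfy $\cos\Theta>0$ (for $F=\mathbb{R}$, $\Theta=0$). For $a,b\in F$ define $$a+_{\infty,\Theta}b=\lim_{|\alpha|\to\infty,\ \arg\alpha=\Theta}\epsilon_\alpha^{-1}\big(\epsilon_\alpha(a)+\epsilon_\alpha(b)\big).$$ Then $(F,+_{\infty,\Theta},\cdot)$ is a non-associative field. Moreover, for $a_1,\dots,a_n\in F$, writing $a_t=|a_t|e^{i\theta_t}$, $[n]_k=\{t\in[n]:|a_t|=|a_k|\}$ and $\sum_{t\in[n]_k}e^{i\theta_t}=r_ks_k$ with $r_k\ge0$, $|s_k|=1$, the limit $${}^{\infty,\Theta}\!\sum_{k\in[n]}a_k:=\lim_{|\alpha|\to\infty,\ \arg\alpha=\Theta}\epsilon_\alpha^{-1}\Big(\sum_{k\in[n]}\epsilon_\alpha(a_k)\Big)$$ equals $|a_M|\,r_M^{-i\tan\Theta}s_M$ if there is $M\in[n]$ with $|a_M|=\max\{|a_k|: k\in[n],\ a_k\neq0,\ r_k\neq0\}$, and equals $0$ otherwise. (2) Let $\Theta$ satisfy $\cos\Theta<0$ (for $F=\mathbb{R}$, $\Theta=\pi$). Define $a+_{-\infty,\Theta}b$ by the same limit with $|\alpha|\to\infty$, $\arg\alpha=\Theta$ (so $\mathrm{Re}\,\alpha\to-\infty$). Then $(F,+_{-\infty,\Theta},\cdot)$ is a non-associative field, and, with the same notation, the corresponding limit ${}^{-\infty,\Theta}\!\sum_{k\in[n]}a_k$ equals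 $|a_m|\,r_m^{-i\tan\Theta}s_m$ if there is $m\in[n]$ with $|a_m|=\min\{|a_k|:k\in[n],\ a_k\neq0,\ r_k\neq0\}$, and equals $0$ otherwise.
   Context: For $\alpha\in\mathbb{C}\setminus i\mathbb{R}$, $\epsilon_\alpha:\mathbb{C}\to\mathbb{C}$ is defined by $\epsilon_\alpha(0)=0$ and $\epsilon_\alpha(rs)=r^\alpha s=e^{\alpha\ln r}s$ for $r>0$, $|s|=1$; it is a multiplicative automorphism with inverse $\epsilon_\alpha^{-1}(\rho t)=\rho^{(1-i\,\mathrm{Im}\alpha)/\mathrm{Re}\alpha}t$. For real $\alpha\neq0$, $\epsilon_\alpha:\mathbb{R}\to\mathbb{R}$ is $x\mapsto\mathrm{sgn}(x)|x|^\alpha$. A non-associative field is a structure $(F,+,\cdot)$ satisfying all field axioms except that addition is not required to be associative. *)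

From Stdlib Require Import Reals Lra.
From Coquelicot Require Import Coquelicot.
Open Scope R_scope.

(* A non-associative field: all field axioms except associativity of addition. *)
Definition nonassoc_field {T : Type} (add mul : T -> T -> T) : Prop :=
  exists zero one : T,
    zero <> one /\
    (forall a b, add a b = add b a) /\
    (forall a, add zero a = a) /\
    (forall a, exists b, add a b = zero) /\
    (forall a b c, mul a (mul b c) = mul (mul a b) c) /\
    (forall a b, mul a b = mul b a) /\
    (forall a, mul one a = a) /\
    (forall a, a <> zero -> exists b, mul a b = one) /\
    (forall a b c, mul a (add b c) = add (mul a b) (mul a c)).

(* M < n is an index with v M = the extremum (w.r.t. [le]: Rle gives the max,
   Rge gives the min) of the set { v k | k < n, P k }. *)
Definition extr_idx (le : R -> R -> Prop) (P : nat -> Prop) (v : nat -> R)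
  (n M : nat) : Prop :=
  (M < n)%nat /\
  (exists k, (k < n)%nat /\ P k /\ v k = v M) /\
  (forall k, (k < n)%nat -> P k -> le (v k) (v M)).

Definition cis (t : R) : C := (cos t, sin t).
Definition cexpc (z : C) : C := (exp (Re z) * cos (Im z), exp (Re z) * sin (Im z)).
Definition cpowr (r : R) (beta : C) : C := cexpc (beta * RtoC (ln r))%C.
Definition cunit (z : C) : C :=
  if Req_EM_T (Cmod z) 0 then RtoC 0 else (z / RtoC (Cmod z))%C.

Definition ceps (alpha z : C) : C :=
  if Req_EM_T (Cmod z) 0 then RtoC 0 else (cpowr (Cmod z) alpha * cunit z)%C.
Definition ceps_inv (alpha w : C) : C :=
  if Req_EM_T (Cmod w) 0 then RtoC 0
  else (cpowr (Cmod w) ((RtoC 1 - Ci * RtoC (Im alpha)) / RtoC (Re alpha)) * cunit w)%C.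

(* f(alpha) -> L as |alpha| -> infinity with arg alpha = Theta,
   i.e. alpha = rho e^{i Theta}, rho -> +infinity *)
Definition clim (Theta : R) (f : C -> C) (L : C) : Prop :=
  filterlim (fun rho : R => f (RtoC rho * cis Theta)%C) (Rbar_locally p_infty) (locally L).

Fixpoint csum (f : nat -> C) (n : nat) : C :=
  match n with O => RtoC 0 | S m => (csum f m + f m)%C end.

Definition cS (a : nat -> C) (n k : nat) : C :=
  csum (fun t => if Req_EM_T (Cmod (a t)) (Cmod (a k)) then cunit (a t) else RtoC 0) n.
Definition cr (a : nat -> C) (n k : nat) : R := Cmod (cS a n k).
Definition cs (a : nat -> C) (n k : nat) : C := cunit (cS a n k).

Definition cadm (a : nat -> C) (n : nat) (k : nat) : Prop := a k <> RtoC 0 /\ cr a n k <> 0.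

Definition cvalue (Theta : R) (a : nat -> C) (n M : nat) : C :=
  (RtoC (Cmod (a M)) * cpowr (cr a n M) (- (Ci * RtoC (tan Theta))) * cs a n M)%C.

Definition rsgn (x : R) : R := if Req_EM_T x 0 then 0 else x / Rabs x.
Definition reps (alpha x : R) : R :=
  if Req_EM_T x 0 then 0 else rsgn x * Rpower (Rabs x) alpha.
Definition reps_inv (alpha y : R) : R := reps (/ alpha) y.

Fixpoint rsum (f : nat -> R) (n : nat) : R :=
  match n with O => 0 | S m => rsum f m + f m end.

Definition rS (a : nat -> R) (n k : nat) : R :=
  rsum (fun t => if Req_EM_T (Rabs (a t)) (Rabs (a k)) then rsgn (a t) else 0) n.
Definition rr (a : nat -> R) (n k : nat) : R := Rabs (rS a n k).
Definition rs (a : nat -> R) (n k : nat) : R := rsgn (rS a n k).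
Definition radm (a : nat -> R) (n : nat) (k : nat) : Prop := a k <> 0 /\ rr a n k <> 0.

From Stdlib Require Import Reals Lra Lia Classical ClassicalEpsilon.
From Coquelicot Require Import Coquelicot.
Open Scope R_scope.

(* Grouping the summands by modulus, [sum_k eps_alpha(a_k) = sum_v v^alpha S_v], where [S_v] is the
   sum of the unit parts of the [a_k] with [|a_k| = v]. Moduli with [S_v = 0] drop out. Among the
   others the extremal one, [R = |a_M|], dominates along the ray [arg alpha = Theta], because
   [|(v/R)^alpha| = exp(|alpha| cos Theta ln(v/R)) -> 0]: the largest modulus wins when
   [cos Theta > 0], the smallest when [cos Theta < 0]. Hence the sum is [R^alpha (S_R + o(1))].
   As [eps_alpha^-1 = eps_beta] with [beta = (1 - i Im alpha)/Re alpha -> -i tan Theta], and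
   [eps_beta w] is multiplicative and jointly continuous at [w <> 0], the limit is
   [R eps_(-i tan Theta)(S_R) = |a_M| r_M^(-i tan Theta) s_M]. The two-term limit is the case
   [n = 2]; its field axioms follow from the multiplicativity of [eps_alpha] and
   [eps_alpha^-1 (eps_alpha z) = z]. The real statements are the complex ones at [Theta = 0, pi]. *)

Ltac C_ext := apply injective_projections; simpl.

Lemma cexpc_plus z w : cexpc (z + w)%C = (cexpc z * cexpc w)%C.
Proof.
  destruct z as [x y], w as [u v]; unfold cexpc, Re, Im; C_ext.
  - rewrite exp_plus, cos_plus; ring.
  - rewrite exp_plus, sin_plus; ring.
Qed.

Lemma cexpc_RtoC x : cexpc (RtoC x) = RtoC (exp x).
Proof. unfold cexpc, Re, Im; simpl; rewrite cos_0, sin_0; C_ext; ring. Qed.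

Lemma cexpc_polar z : cexpc z = (RtoC (exp (Re z)) * cis (Im z))%C.
Proof. unfold cexpc, cis; C_ext; ring. Qed.

Lemma Cmod_cis t : Cmod (cis t) = 1.
Proof.
  unfold Cmod, cis; simpl fst; simpl snd.
  replace (cos t ^ 2 + sin t ^ 2) with 1; [apply sqrt_1|].
  rewrite <- (sin2_cos2 t); unfold Rsqr; ring.
Qed.

Lemma Cmod_cexpc z : Cmod (cexpc z) = exp (Re z).
Proof.
  rewrite cexpc_polar, Cmod_mult, Cmod_cis, Cmod_R, Rabs_pos_eq by (left; apply exp_pos).
  ring.
Qed.

Lemma cunit_0 z : Cmod z = 0 -> cunit z = RtoC 0.
Proof. intro H; unfold cunit; destruct Req_EM_T; [reflexivity | contradiction]. Qed.

Lemma cunit_eq z : Cmod z <> 0 -> cunit z = (RtoC (/ Cmod z) * z)%C.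
Proof.
  intro H; unfold cunit; destruct Req_EM_T; [contradiction|].
  destruct z; unfold Cdiv, Cinv; C_ext; field; auto.
Qed.

Lemma Cmod_cunit z : Cmod z <> 0 -> Cmod (cunit z) = 1.
Proof.
  intro H; rewrite cunit_eq, Cmod_mult, Cmod_R by auto.
  pose proof (Cmod_ge_0 z).
  rewrite Rabs_pos_eq by (left; apply Rinv_0_lt_compat; lra); field; auto.
Qed.

Lemma cunit_polar z : z = (RtoC (Cmod z) * cunit z)%C.
Proof.
  destruct (Req_EM_T (Cmod z) 0) as [H|H].
  - rewrite cunit_0, (Cmod_eq_0 _ H) by auto; ring.
  - rewrite cunit_eq by auto; destruct z; C_ext; field; auto.
Qed.

Lemma cis_opp_mult t : (cis (- t) * cis t)%C = RtoC 1.
Proof.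
  unfold cis; rewrite cos_neg, sin_neg; C_ext; try ring.
  rewrite <- (sin2_cos2 t); unfold Rsqr; ring.
Qed.

Lemma cunit_mult z w : cunit (z * w)%C = (cunit z * cunit w)%C.
Proof.
  destruct (Req_EM_T (Cmod z) 0) as [Hz|Hz].
  { rewrite (Cmod_eq_0 _ Hz), Cmult_0_l, cunit_0 by apply Cmod_0; ring. }
  destruct (Req_EM_T (Cmod w) 0) as [Hw|Hw].
  { rewrite (Cmod_eq_0 _ Hw), Cmult_0_r, cunit_0 by apply Cmod_0; ring. }
  assert (Hzw : Cmod (z * w) <> 0)
    by (rewrite Cmod_mult; apply Rmult_integral_contrapositive; auto).
  rewrite !cunit_eq, Cmod_mult by auto.
  destruct z, w; C_ext; field; auto.
Qed.

Lemma cpowr_mult r1 r2 b :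
  0 < r1 -> 0 < r2 -> cpowr (r1 * r2) b = (cpowr r1 b * cpowr r2 b)%C.
Proof.
  intros; unfold cpowr; rewrite ln_mult, RtoC_plus, Cmult_plus_distr_l by auto.
  apply cexpc_plus.
Qed.

Lemma cpowr_1 b : cpowr 1 b = RtoC 1.
Proof. unfold cpowr; rewrite ln_1, Cmult_0_r, cexpc_RtoC, exp_0; reflexivity. Qed.

Lemma ceps_eq b z : ceps b z = (cpowr (Cmod z) b * cunit z)%C.
Proof.
  unfold ceps; destruct Req_EM_T as [H|H]; auto.
  rewrite cunit_0 by auto; ring.
Qed.

Lemma ceps_0 b : ceps b (RtoC 0) = RtoC 0.
Proof. rewrite ceps_eq, cunit_0 by apply Cmod_0; ring. Qed.

Lemma ceps_mult b z w : ceps b (z * w)%C = (ceps b z * ceps b w)%C.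
Proof.
  destruct (Req_EM_T (Cmod z) 0) as [Hz|Hz].
  { rewrite (Cmod_eq_0 _ Hz), Cmult_0_l, ceps_0; ring. }
  destruct (Req_EM_T (Cmod w) 0) as [Hw|Hw].
  { rewrite (Cmod_eq_0 _ Hw), Cmult_0_r, ceps_0; ring. }
  pose proof (Cmod_ge_0 z); pose proof (Cmod_ge_0 w).
  rewrite !ceps_eq, Cmod_mult, cunit_mult, cpowr_mult by lra; ring.
Qed.

Lemma ceps_unit b u : Cmod u = 1 -> ceps b u = u.
Proof.
  intro H; rewrite ceps_eq, H, cpowr_1, cunit_eq, H, Rinv_1 by lra; ring.
Qed.

Lemma ceps_pos b r : 0 < r -> ceps b (RtoC r) = cpowr r b.
Proof.
  intro Hr; rewrite ceps_eq, cunit_eq; rewrite Cmod_R, Rabs_pos_eq; try lra.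
  rewrite <- RtoC_mult, Rinv_l by lra; ring.
Qed.

Lemma ceps_factor b z r :
  0 < r -> ceps b z = (cpowr r b * (cpowr (Cmod z / r) b * cunit z))%C.
Proof.
  intro Hr; rewrite ceps_eq.
  destruct (Req_EM_T (Cmod z) 0) as [Hz|Hz].
  { rewrite cunit_0 by auto; ring. }
  pose proof (Cmod_ge_0 z).
  rewrite Cmult_assoc, <- cpowr_mult by (try apply Rdiv_lt_0_compat; lra).
  do 2 f_equal; field; lra.
Qed.

Definition ceps_inv_exponent (alpha : C) : C :=
  ((RtoC 1 - Ci * RtoC (Im alpha)) / RtoC (Re alpha))%C.

Lemma ceps_inv_ceps_exponent alpha w : ceps_inv alpha w = ceps (ceps_inv_exponent alpha) w.
Proof. reflexivity. Qed.

(* With [alpha = p + i q] and [L = ln |z|], [eps_alpha z = e^(pL) cis(qL) (z/|z|)], and the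
   exponent [(1 - i q)/p] sends [e^(pL)] to [|z| cis(-qL)]. *)
Lemma ceps_inv_ceps alpha z : Re alpha <> 0 -> ceps_inv alpha (ceps alpha z) = z.
Proof.
  intro Hre; rewrite ceps_inv_ceps_exponent.
  destruct (Req_EM_T (Cmod z) 0) as [Hz|Hz].
  { rewrite (Cmod_eq_0 _ Hz), !ceps_0; reflexivity. }
  pose proof (Cmod_ge_0 z).
  set (L := ln (Cmod z)).
  rewrite (ceps_eq alpha z); unfold cpowr at 1; fold L; rewrite cexpc_polar.
  rewrite !ceps_mult, ceps_pos, (ceps_unit _ (cis _)), (ceps_unit _ (cunit z))
    by (apply exp_pos || apply Cmod_cis || apply Cmod_cunit; auto).
  unfold cpowr; rewrite ln_exp, cexpc_polar.
  replace (Re _) with L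
    by (destruct alpha; unfold ceps_inv_exponent, Re, Im in *; simpl; field; auto).
  replace (Im (_ * RtoC (Re _))) with (- Im (alpha * RtoC L))
    by (destruct alpha; unfold ceps_inv_exponent, Re, Im in *; simpl; field; auto).
  rewrite <- (Cmult_assoc (RtoC (exp L))), cis_opp_mult, Cmult_1_r; unfold L.
  rewrite exp_ln by lra; symmetry; apply cunit_polar.
Qed.

(** * Grouping a sum by moduli *)

Lemma csum_ext_lt f g n : (forall k, (k < n)%nat -> f k = g k) -> csum f n = csum g n.
Proof.
  induction n as [|n IH]; intro H; simpl; auto.
  rewrite IH, H; auto.
Qed.

Lemma csum_zero f n : (forall k, (k < n)%nat -> f k = RtoC 0) -> csum f n = RtoC 0.
Proof.
  induction n as [|n IH]; intro H; simpl; auto.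
  rewrite IH, H; auto; ring.
Qed.

Lemma csum_plus f g n : csum (fun k => f k + g k)%C n = (csum f n + csum g n)%C.
Proof. induction n as [|n IH]; simpl; [ring | rewrite IH; ring]. Qed.

Lemma csum_scal c f n : csum (fun k => c * f k)%C n = (c * csum f n)%C.
Proof. induction n as [|n IH]; simpl; [ring | rewrite IH; ring]. Qed.

Lemma csum_swap (F : nat -> nat -> C) n m :
  csum (fun k => csum (F k) m) n = csum (fun j => csum (fun k => F k j) n) m.
Proof.
  induction n as [|n IH]; simpl.
  - symmetry; apply csum_zero; reflexivity.
  - rewrite IH, <- csum_plus; reflexivity.
Qed.

Lemma RtoC_rsum f n : RtoC (rsum f n) = csum (fun k => RtoC (f k)) n.
Proof. induction n as [|n IH]; simpl; auto; rewrite RtoC_plus, IH; reflexivity. Qed.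

Definition mod_count (a : nat -> C) (n : nat) (v : R) : R :=
  rsum (fun t => if Req_EM_T (Cmod (a t)) v then 1 else 0) n.

Lemma mod_count_nonneg a n v : 0 <= mod_count a n v.
Proof.
  unfold mod_count; induction n as [|n IH]; simpl; [lra|].
  destruct Req_EM_T; lra.
Qed.

Lemma mod_count_pos a n k : (k < n)%nat -> 0 < mod_count a n (Cmod (a k)).
Proof.
  induction n as [|n IH]; intro Hk; [lia|].
  pose proof (mod_count_nonneg a n (Cmod (a k))).
  unfold mod_count in *; simpl.
  destruct (Nat.eq_dec k n) as [->|Hne].
  - destruct Req_EM_T as [_|E]; [lra | contradiction].
  - pose proof (IH ltac:(lia)); destruct Req_EM_T; lra.
Qed.

(* Double counting: on the left, the class of indices of modulus [v] is counted
   [mod_count a n v] times. *)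
Lemma csum_cS_weighted a n (g : R -> C) :
  csum (fun k => g (Cmod (a k)) / RtoC (mod_count a n (Cmod (a k))) * cS a n k)%C n =
  csum (fun t => g (Cmod (a t)) * cunit (a t))%C n.
Proof.
  set (w v := (g v / RtoC (mod_count a n v))%C).
  transitivity (csum (fun t => csum (fun k =>
    if Req_EM_T (Cmod (a t)) (Cmod (a k)) then w (Cmod (a t)) * cunit (a t) else RtoC 0)%C n) n).
  - rewrite <- csum_swap; apply csum_ext_lt; intros k _.
    unfold cS; rewrite <- csum_scal; apply csum_ext_lt; intros t _.
    destruct Req_EM_T as [E|_]; [rewrite E; fold (w (Cmod (a k))); ring | ring].
  - apply csum_ext_lt; intros t Ht.
    transitivity (w (Cmod (a t)) * cunit (a t) * RtoC (mod_count a n (Cmod (a t))))%C.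
    + unfold mod_count; rewrite RtoC_rsum, <- csum_scal; apply csum_ext_lt; intros k _.
      destruct (Req_EM_T (Cmod (a t)) (Cmod (a k))), (Req_EM_T (Cmod (a k)) (Cmod (a t)));
        try ring; congruence.
    + pose proof (mod_count_pos a n t Ht); unfold w; field.
      intro E; apply RtoC_inj in E; lra.
Qed.

Lemma cS_Cmod_eq a n k j : Cmod (a k) = Cmod (a j) -> cS a n k = cS a n j.
Proof. intro E; unfold cS; rewrite E; reflexivity. Qed.

Lemma cS_Cmod_0 a n k : Cmod (a k) = 0 -> cS a n k = RtoC 0.
Proof.
  intro H; apply csum_zero; intros t _.
  destruct Req_EM_T as [E|_]; [apply cunit_0; congruence | reflexivity].
Qed.

Lemma ceps_explicit b w :
  ceps b w = (cexpc (b * RtoC (ln (Cmod w))) * (RtoC (/ Cmod w) * w))%C.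
Proof.
  rewrite ceps_eq; unfold cpowr; f_equal.
  destruct (Req_EM_T (Cmod w) 0) as [H|H].
  - rewrite cunit_0, (Cmod_eq_0 _ H) by auto; ring.
  - apply cunit_eq; auto.
Qed.

Section ComplexLimits.
Context {T : Type} {F : (T -> Prop) -> Prop} {FF : Filter F}.

Lemma filterlim_C (f : T -> C) x y :
  filterlim (fun t => Re (f t)) F (locally x) ->
  filterlim (fun t => Im (f t)) F (locally y) ->
  filterlim f F (locally ((x, y) : C)).
Proof.
  intros H1 H2 P [eps He]; unfold filtermap.
  apply filter_imp with (fun t => @ball R_UniformSpace x eps (Re (f t)) /\
                                  @ball R_UniformSpace y eps (Im (f t))).
  - intros t [h1 h2]; apply He; destruct (f t); split; auto.
  - apply filter_and; [apply H1 | apply H2]; apply locally_ball.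
Qed.

Lemma filterlim_Re (f : T -> C) z :
  filterlim f F (locally z) -> filterlim (fun t => Re (f t)) F (locally (Re z)).
Proof.
  intros H P [eps He]; apply (H (fun w => P (Re w))); exists eps.
  intros w [Hw _]; apply He, Hw.
Qed.

Lemma filterlim_Im (f : T -> C) z :
  filterlim f F (locally z) -> filterlim (fun t => Im (f t)) F (locally (Im z)).
Proof.
  intros H P [eps He]; apply (H (fun w => P (Im w))); exists eps.
  intros w [_ Hw]; apply He, Hw.
Qed.

Lemma filterlim_RtoC (f : T -> R) x :
  filterlim f F (locally x) -> filterlim (fun t => RtoC (f t)) F (locally (RtoC x)).
Proof. intro H; apply filterlim_C; [exact H | apply filterlim_const]. Qed.

Lemma filterlim_Cmod_0 (f : T -> C) :
  filterlim (fun t => Cmod (f t)) F (locally 0) -> filterlim f F (locally (RtoC 0)).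
Proof. exact (filterlim_norm_zero (V := C_NormedModule) f). Qed.

Lemma filterlim_Cmod (f : T -> C) z :
  filterlim f F (locally z) -> filterlim (fun t => Cmod (f t)) F (locally (Cmod z)).
Proof.
  intro H; eapply filterlim_comp; [exact H|].
  exact (@filterlim_norm C_AbsRing C_NormedModule z).
Qed.

Lemma filterlim_Cplus (f g : T -> C) x y :
  filterlim f F (locally x) -> filterlim g F (locally y) ->
  filterlim (fun t => f t + g t)%C F (locally (x + y)%C).
Proof.
  intros H1 H2; eapply filterlim_comp_2; [exact H1 | exact H2 |].
  exact (@filterlim_plus C_AbsRing C_NormedModule x y).
Qed.

(* [filterlim_mult] is stated for the uniform structure of [C_AbsRing], which has the
   same neighbourhoods as [C_UniformSpace] by [locally_C]. *)
Lemma filterlim_Cmult (f g : T -> C) x y :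
  filterlim f F (locally x) -> filterlim g F (locally y) ->
  filterlim (fun t => f t * g t)%C F (locally (x * y)%C).
Proof.
  intros H1 H2.
  apply (filterlim_comp_2 (G := @locally (AbsRing_UniformSpace C_AbsRing) x)
           (H := @locally (AbsRing_UniformSpace C_AbsRing) y) f g Cmult).
  - intros P HP; apply H1, locally_C, HP.
  - intros P HP; apply H2, locally_C, HP.
  - intros P HP; apply (@filterlim_mult C_AbsRing x y), locally_C, HP.
Qed.

Lemma filterlim_csum (f : T -> nat -> C) (l : nat -> C) n :
  (forall k, (k < n)%nat -> filterlim (fun t => f t k) F (locally (l k))) ->
  filterlim (fun t => csum (f t) n) F (locally (csum l n)).
Proof.
  induction n as [|n IH]; intro H; simpl.
  - apply filterlim_const.
  - apply filterlim_Cplus; [apply IH; auto | apply H; lia].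
Qed.

Lemma filterlim_cexpc (f : T -> C) z :
  filterlim f F (locally z) -> filterlim (fun t => cexpc (f t)) F (locally (cexpc z)).
Proof.
  intro H.
  assert (Hre := filterlim_Re f z H); assert (Him := filterlim_Im f z H).
  unfold cexpc at 2; apply filterlim_C; simpl;
    (eapply filterlim_comp_2;
      [ eapply filterlim_comp; [exact Hre | apply continuous_exp]
      | eapply filterlim_comp; [exact Him | first [apply continuous_cos | apply continuous_sin]]
      | apply (@filterlim_mult R_AbsRing) ]).
Qed.

Lemma filterlim_ceps (b w : T -> C) b0 w0 :
  w0 <> RtoC 0 -> filterlim b F (locally b0) -> filterlim w F (locally w0) ->
  filterlim (fun t => ceps (b t) (w t)) F (locally (ceps b0 w0)).
Proof.
  intros Hw0 Hb Hw.
  assert (Hm : 0 < Cmod w0) by (apply Cmod_gt_0; auto).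
  assert (Hmod := filterlim_Cmod w w0 Hw).
  eapply filterlim_ext; [intro t; symmetry; apply ceps_explicit|].
  rewrite ceps_explicit.
  apply filterlim_Cmult;
    [apply filterlim_cexpc, filterlim_Cmult; auto | apply filterlim_Cmult; auto];
    apply filterlim_RtoC; eapply filterlim_comp; eauto.
  - apply continuous_ln; auto.
  - apply continuous_Rinv; lra.
Qed.

End ComplexLimits.

(** * Limits along the ray [arg alpha = Theta] *)

Definition ray (Th rho : R) : C := (RtoC rho * cis Th)%C.

Lemma ray_eq Th rho : ray Th rho = ((rho * cos Th)%R, (rho * sin Th)%R).
Proof. unfold ray, cis; C_ext; ring. Qed.

Lemma Re_ray_neq0 Th rho : cos Th <> 0 -> 0 < rho -> Re (ray Th rho) <> 0.
Proof. intros; rewrite ray_eq; simpl; apply Rmult_integral_contrapositive; split; lra. Qed.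

Lemma clim_unique Th f L1 L2 : clim Th f L1 -> clim Th f L2 -> L1 = L2.
Proof.
  apply (@filterlim_locally_unique _ C_AbsRing C_NormedModule (Rbar_locally p_infty)
           (Proper_StrongProper _ (Rbar_locally_filter p_infty))).
Qed.

Lemma clim_ext_pos Th f g L :
  (forall rho, 0 < rho -> f (ray Th rho) = g (ray Th rho)) -> clim Th f L -> clim Th g L.
Proof. intros Hfg; apply filterlim_ext_loc; exists 0; auto. Qed.

Lemma filterlim_exp_neg_scal K : K < 0 ->
  filterlim (fun rho => exp (rho * K)) (Rbar_locally p_infty) (locally 0).
Proof.
  intro HK.
  apply (is_lim_comp exp (fun rho => rho * K) p_infty 0 m_infty is_lim_exp_m).
  - replace m_infty with (Rbar_mult p_infty K).
    + apply is_lim_scal_r, is_lim_id.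
    + unfold Rbar_mult, Rbar_mult'; destruct Rle_dec; [exfalso; lra | reflexivity].
  - exists 0; intros; discriminate.
Qed.

Lemma filterlim_cpowr_ray_0 Th y : 0 < y -> cos Th * ln y < 0 ->
  filterlim (fun rho => cpowr y (ray Th rho)) (Rbar_locally p_infty) (locally (RtoC 0)).
Proof.
  intros Hy HK; apply filterlim_Cmod_0.
  eapply filterlim_ext; [|apply (filterlim_exp_neg_scal _ HK)].
  intro rho; unfold cpowr; rewrite Cmod_cexpc, ray_eq; simpl; f_equal; ring.
Qed.

Lemma filterlim_ceps_inv_exponent_ray Th : cos Th <> 0 ->
  filterlim (fun rho => ceps_inv_exponent (ray Th rho)) (Rbar_locally p_infty)
    (locally (- (Ci * RtoC (tan Th))))%C.
Proof.
  intro Hc; set (c := (- (Ci * RtoC (tan Th)))%C).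
  apply filterlim_ext_loc with (fun rho => RtoC (/ cos Th) * RtoC (/ rho) + c)%C.
  - exists 0; intros rho Hrho; rewrite ray_eq.
    unfold c, ceps_inv_exponent, tan, Re, Im; C_ext; field; split; lra.
  - replace (locally c) with (locally (RtoC (/ cos Th) * RtoC 0 + c)%C) by (f_equal; ring).
    apply filterlim_Cplus; [apply filterlim_Cmult|]; try apply filterlim_const.
    apply filterlim_RtoC, (filterlim_Rbar_inv p_infty); discriminate.
Qed.

Definition eps_sum (a : nat -> C) (n : nat) (alpha : C) : C :=
  ceps_inv alpha (csum (fun k => ceps alpha (a k)) n).

Lemma csum_ceps_grouped a n alpha r : 0 < r ->
  csum (fun k => ceps alpha (a k)) n =
  (cpowr r alpha * csum (fun k => cpowr (Cmod (a k) / r) alpha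
                          / RtoC (mod_count a n (Cmod (a k))) * cS a n k) n)%C.
Proof.
  intro Hr; rewrite (csum_cS_weighted a n (fun v => cpowr (v / r) alpha)), <- csum_scal.
  apply csum_ext_lt; intros k _; apply ceps_factor, Hr.
Qed.

Lemma eps_sum_grouped a n alpha r : 0 < r -> Re alpha <> 0 ->
  eps_sum a n alpha =
  (RtoC r * ceps (ceps_inv_exponent alpha)
     (csum (fun k => cpowr (Cmod (a k) / r) alpha
                     / RtoC (mod_count a n (Cmod (a k))) * cS a n k) n))%C.
Proof.
  intros Hr Hre; unfold eps_sum.
  rewrite (csum_ceps_grouped a n alpha r Hr), <- (ceps_pos alpha r Hr).
  rewrite ceps_inv_ceps_exponent, ceps_mult; f_equal; exact (ceps_inv_ceps alpha _ Hre).
Qed.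

Lemma cadm_of_cS_neq0 a n k : cS a n k <> RtoC 0 -> cadm a n k.
Proof.
  intro H; split.
  - intro E; apply H, cS_Cmod_0; rewrite E; apply Cmod_0.
  - intro E; apply H, Cmod_eq_0, E.
Qed.

(* [le x y] makes [|(x/y)^alpha| = exp(|alpha| cos Th ln(x/y))] vanish along the ray. *)
Definition decay_order (Th : R) (le : R -> R -> Prop) : Prop :=
  forall x y, 0 < x -> 0 < y -> x <> y -> le x y -> cos Th * ln (x / y) < 0.

Lemma decay_order_Rle Th : 0 < cos Th -> decay_order Th Rle.
Proof.
  intros Hc x y Hx Hy Hne Hle.
  assert (ln x < ln y) by (apply ln_increasing; lra).
  rewrite ln_div by lra; nra.
Qed.

Lemma decay_order_Rge Th : cos Th < 0 -> decay_order Th Rge.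
Proof.
  intros Hc x y Hx Hy Hne Hge.
  assert (ln y < ln x) by (apply ln_increasing; lra).
  rewrite ln_div by lra; nra.
Qed.

Section ExtremalModulus.
Variables (Th : R) (le : R -> R -> Prop).
Hypotheses (cos_Th_neq0 : cos Th <> 0) (le_decay : decay_order Th le).
Variables (a : nat -> C) (n M : nat).
Hypothesis extr_M : extr_idx le (cadm a n) (fun k => Cmod (a k)) n M.

Lemma extr_Cmod_pos : 0 < Cmod (a M).
Proof.
  destruct extr_M as [_ [[k [_ [[Hk _] E]]] _]].
  rewrite <- E; apply Cmod_gt_0, Hk.
Qed.

Lemma extr_cS_neq0 : cS a n M <> RtoC 0.
Proof.
  destruct extr_M as [_ [[k [_ [[_ Hr] E]]] _]].
  rewrite <- (cS_Cmod_eq a n k M E); intro H; apply Hr; unfold cr; rewrite H; apply Cmod_0.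
Qed.

Lemma filterlim_cpowr_ratio_ray k : (k < n)%nat -> cS a n k <> RtoC 0 ->
  filterlim (fun rho => cpowr (Cmod (a k) / Cmod (a M)) (ray Th rho)) (Rbar_locally p_infty)
    (locally (if Req_EM_T (Cmod (a k)) (Cmod (a M)) then RtoC 1 else RtoC 0)).
Proof.
  intros Hk HS; pose proof extr_Cmod_pos as HM.
  destruct Req_EM_T as [E|E].
  - rewrite E, Rdiv_diag by lra.
    eapply filterlim_ext; [intro; symmetry; apply cpowr_1 | apply filterlim_const].
  - destruct (cadm_of_cS_neq0 a n k HS) as [Hak Hr].
    assert (Hk0 : 0 < Cmod (a k)) by (apply Cmod_gt_0, Hak).
    apply filterlim_cpowr_ray_0; [apply Rdiv_lt_0_compat; lra|].
    apply le_decay; auto.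
    destruct extr_M as [_ [_ Hmax]]; apply Hmax; auto; split; auto.
Qed.

Lemma filterlim_grouped_sum_ray :
  filterlim (fun rho => csum (fun k => cpowr (Cmod (a k) / Cmod (a M)) (ray Th rho)
                                      / RtoC (mod_count a n (Cmod (a k))) * cS a n k)%C n)
    (Rbar_locally p_infty) (locally (cS a n M)).
Proof.
  set (g v := if Req_EM_T v (Cmod (a M)) then RtoC 1 else RtoC 0).
  replace (cS a n M) with
    (csum (fun k => g (Cmod (a k)) / RtoC (mod_count a n (Cmod (a k))) * cS a n k)%C n).
  2:{ rewrite csum_cS_weighted; apply csum_ext_lt; intros t _.
      unfold g; destruct Req_EM_T; ring. }
  apply filterlim_csum; intros k Hk; unfold Cdiv.
  destruct (Ceq_dec (cS a n k) (RtoC 0)) as [H0|H0].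
  - rewrite H0, Cmult_0_r.
    apply filterlim_ext with (fun _ => RtoC 0); [intro; ring | apply filterlim_const].
  - repeat apply filterlim_Cmult; try apply filterlim_const.
    apply filterlim_cpowr_ratio_ray; auto.
Qed.

Lemma clim_eps_sum_extr : clim Th (eps_sum a n) (cvalue Th a n M).
Proof.
  pose proof extr_Cmod_pos as HM.
  apply clim_ext_pos with (fun alpha => RtoC (Cmod (a M)) * ceps (ceps_inv_exponent alpha)
    (csum (fun k => cpowr (Cmod (a k) / Cmod (a M)) alpha
                    / RtoC (mod_count a n (Cmod (a k))) * cS a n k) n))%C.
  { intros rho Hrho; symmetry; apply eps_sum_grouped, Re_ray_neq0; auto. }
  replace (cvalue Th a n M)
    with (RtoC (Cmod (a M)) * ceps (- (Ci * RtoC (tan Th))) (cS a n M))%C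
    by (unfold cvalue, cr, cs; rewrite ceps_eq; ring).
  apply filterlim_Cmult; [apply filterlim_const|].
  apply filterlim_ceps; [apply extr_cS_neq0 | |].
  - apply filterlim_ceps_inv_exponent_ray, cos_Th_neq0.
  - apply filterlim_grouped_sum_ray.
Qed.

End ExtremalModulus.

Lemma eps_sum_all_cS_0 a n alpha :
  (forall k, (k < n)%nat -> cS a n k = RtoC 0) -> eps_sum a n alpha = RtoC 0.
Proof.
  intro H0; unfold eps_sum.
  rewrite (csum_ceps_grouped a n alpha 1 Rlt_0_1), csum_zero.
  - rewrite Cmult_0_r, ceps_inv_ceps_exponent; apply ceps_0.
  - intros k Hk; rewrite H0 by exact Hk; ring.
Qed.

Definition total_preorder (le : R -> R -> Prop) : Prop :=
  (forall x, le x x) /\ (forall x y z, le x y -> le y z -> le x z) /\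
  (forall x y, le x y \/ le y x).

Lemma total_preorder_Rle : total_preorder Rle.
Proof.
  split; [exact Rle_refl | split; [exact Rle_trans|]].
  intros x y; destruct (Rle_or_lt x y); [left | right]; lra.
Qed.

Lemma total_preorder_Rge : total_preorder Rge.
Proof.
  split; [exact Rge_refl | split; [exact Rge_trans|]].
  intros x y; destruct (Rle_or_lt x y); [right | left]; lra.
Qed.

Section Extremum.
Variable le : R -> R -> Prop.
Hypothesis le_total_preorder : total_preorder le.

Lemma extr_idx_exists (P : nat -> Prop) (v : nat -> R) n :
  (exists k, (k < n)%nat /\ P k) -> exists M, extr_idx le P v n M.
Proof.
  destruct le_total_preorder as [le_refl [le_trans le_total]].
  induction n as [|n IH]; intros [k [Hk Pk]]; [lia|].
  destruct (classic (exists j, (j < n)%nat /\ P j)) as [Hex|Hnone].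
  - destruct (IH Hex) as [M [HM [[j [Hj [Pj Ej]]] Hmax]]].
    destruct (classic (P n /\ le (v M) (v n))) as [[Pn HMn]|Hkeep].
    + exists n; split; [lia|]; split; [exists n; auto|].
      intros i Hi Pi; destruct (Nat.eq_dec i n) as [->|Hin]; [apply le_refl|].
      apply le_trans with (v M); auto; apply Hmax; auto; lia.
    + exists M; split; [lia|]; split; [exists j; split; auto; lia|].
      intros i Hi Pi; destruct (Nat.eq_dec i n) as [->|Hin]; [|apply Hmax; auto; lia].
      destruct (le_total (v n) (v M)); tauto.
  - assert (k = n) as ->.
    { destruct (Nat.eq_dec k n); auto; exfalso; apply Hnone; exists k; split; auto; lia. }
    exists n; split; [lia|]; split; [exists n; auto|].
    intros i Hi Pi; destruct (Nat.eq_dec i n) as [->|Hin]; [apply le_refl|].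
    exfalso; apply Hnone; exists i; split; auto; lia.
Qed.

Lemma clim_eps_sum_no_extr Th a n :
  (~ exists M, extr_idx le (cadm a n) (fun k => Cmod (a k)) n M) ->
  clim Th (eps_sum a n) (RtoC 0).
Proof.
  intro Hno.
  apply filterlim_ext with (fun _ => RtoC 0); [|apply filterlim_const].
  intro rho; symmetry; apply eps_sum_all_cS_0; intros k Hk.
  apply NNPP; intro HS; apply Hno, extr_idx_exists.
  exists k; split; auto; apply cadm_of_cS_neq0, HS.
Qed.

End Extremum.

Lemma nonassoc_field_C (add : C -> C -> C) :
  (forall a b, add a b = add b a) ->
  (forall a, add (RtoC 0) a = a) ->
  (forall a, add a (- a)%C = RtoC 0) ->
  (forall a b c, (a * add b c)%C = add (a * b)%C (a * c)%C) ->
  nonassoc_field add Cmult.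
Proof.
  intros Hcomm H0 Hopp Hdistr; exists (RtoC 0), (RtoC 1).
  repeat split; auto.
  - intro E; apply RtoC_inj in E; lra.
  - intro a; exists (- a)%C; auto.
  - exact Cmult_assoc.
  - exact Cmult_comm.
  - exact Cmult_1_l.
  - intros a Ha; exists (/ a)%C; apply Cinv_r, Ha.
Qed.

Lemma nonassoc_field_R_of_C (addC : C -> C -> C) (add : R -> R -> R) :
  (forall a b, addC (RtoC a) (RtoC b) = RtoC (add a b)) ->
  (forall a b, addC a b = addC b a) ->
  (forall a, addC (RtoC 0) a = a) ->
  (forall a, addC a (- a)%C = RtoC 0) ->
  (forall a b c, (a * addC b c)%C = addC (a * b)%C (a * c)%C) ->
  nonassoc_field add Rmult.
Proof.
  intros HR Hcomm H0 Hopp Hdistr; exists 0, 1.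
  repeat split; try (intros; ring).
  - lra.
  - intros a b; apply RtoC_inj; rewrite <- !HR; apply Hcomm.
  - intro a; apply RtoC_inj; rewrite <- HR; apply H0.
  - intro a; exists (- a); apply RtoC_inj; rewrite <- HR, RtoC_opp; apply Hopp.
  - intros a Ha; exists (/ a); field; exact Ha.
  - intros a b c; apply RtoC_inj; rewrite <- HR, !RtoC_mult, <- HR; apply Hdistr.
Qed.

Definition ray_add_fun (a b : C) (alpha : C) : C := ceps_inv alpha (ceps alpha a + ceps alpha b)%C.

Section RayAddition.
Variables (Th : R) (add : C -> C -> C).
Hypotheses (cos_Th_neq0 : cos Th <> 0) (add_lim : forall a b, clim Th (ray_add_fun a b) (add a b)).

Lemma ray_add_comm a b : add a b = add b a.
Proof.
  apply (clim_unique Th (ray_add_fun a b)); auto.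
  eapply filterlim_ext; [|apply (add_lim b a)].
  intro; unfold ray_add_fun; rewrite Cplus_comm; reflexivity.
Qed.

Lemma ray_add_0_l a : add (RtoC 0) a = a.
Proof.
  apply (clim_unique Th (ray_add_fun (RtoC 0) a)); auto.
  apply clim_ext_pos with (fun _ => a); [|unfold clim; apply filterlim_const].
  intros rho Hrho; unfold ray_add_fun; rewrite ceps_0, Cplus_0_l, ceps_inv_ceps; auto.
  apply Re_ray_neq0; auto.
Qed.

Lemma ray_add_opp_r a : add a (- a)%C = RtoC 0.
Proof.
  apply (clim_unique Th (ray_add_fun a (- a)%C)); auto.
  unfold clim; apply filterlim_ext with (fun _ => RtoC 0); [|apply filterlim_const].
  intro rho; unfold ray_add_fun.
  replace (- a)%C with (RtoC (-1) * a)%C by ring.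
  rewrite ceps_mult, (ceps_unit _ (RtoC (-1)))
    by (rewrite Cmod_R; unfold Rabs; destruct Rcase_abs; lra).
  replace (_ + _)%C with (RtoC 0) by ring.
  rewrite ceps_inv_ceps_exponent, ceps_0; reflexivity.
Qed.

Lemma ray_add_mult_distr_l a b c : (a * add b c)%C = add (a * b)%C (a * c)%C.
Proof.
  apply (clim_unique Th (ray_add_fun (a * b)%C (a * c)%C)); auto.
  apply clim_ext_pos with (fun alpha => a * ray_add_fun b c alpha)%C.
  - intros rho Hrho; unfold ray_add_fun.
    rewrite !ceps_mult, <- Cmult_plus_distr_l, !ceps_inv_ceps_exponent, ceps_mult.
    f_equal; symmetry; apply ceps_inv_ceps, Re_ray_neq0; auto.
  - unfold clim; apply filterlim_Cmult; [apply filterlim_const | apply add_lim].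
Qed.

End RayAddition.

Definition pair_seq (a b : C) (k : nat) : C := match k with O => a | _ => b end.

Section RayTheorem.
Variables (Th : R) (le : R -> R -> Prop).
Hypotheses (cos_Th_neq0 : cos Th <> 0) (le_decay : decay_order Th le)
  (le_total_preorder : total_preorder le).

Lemma clim_eps_sum n a :
  (forall M, extr_idx le (cadm a n) (fun k => Cmod (a k)) n M ->
     clim Th (eps_sum a n) (cvalue Th a n M)) /\
  ((~ exists M, extr_idx le (cadm a n) (fun k => Cmod (a k)) n M) ->
     clim Th (eps_sum a n) (RtoC 0)).
Proof.
  split; [intros M HM; apply (clim_eps_sum_extr _ le) | apply clim_eps_sum_no_extr]; auto.
Qed.

Lemma ray_add_exists : exists add, forall a b, clim Th (ray_add_fun a b) (add a b).
Proof.
  assert (Hex : forall a b, exists L, clim Th (ray_add_fun a b) L).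
  { intros a b.
    assert (E : forall alpha, eps_sum (pair_seq a b) 2 alpha = ray_add_fun a b alpha)
      by (intro; unfold eps_sum, ray_add_fun; simpl; rewrite Cplus_0_l; reflexivity).
    destruct (clim_eps_sum 2 (pair_seq a b)) as [Hextr Hno].
    destruct (classic (exists M, extr_idx le (cadm (pair_seq a b) 2)
                                   (fun k => Cmod (pair_seq a b k)) 2 M)) as [[M HM]|HM];
      eexists; (eapply filterlim_ext; [intro; apply E|]); [apply Hextr, HM | apply Hno, HM]. }
  exists (fun a b => proj1_sig (constructive_indefinite_description _ (Hex a b))).
  intros a b; exact (proj2_sig (constructive_indefinite_description _ (Hex a b))).
Qed.

Lemma complex_ray_theorem :
  (exists add : C -> C -> C,
     (forall a b, clim Th (ray_add_fun a b) (add a b)) /\ nonassoc_field add Cmult) /\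
  (forall n a,
     (forall M, extr_idx le (cadm a n) (fun k => Cmod (a k)) n M ->
        clim Th (eps_sum a n) (cvalue Th a n M)) /\
     ((~ exists M, extr_idx le (cadm a n) (fun k => Cmod (a k)) n M) ->
        clim Th (eps_sum a n) (RtoC 0))).
Proof.
  split; [|exact clim_eps_sum].
  destruct ray_add_exists as [add Hadd]; exists add; split; auto.
  apply nonassoc_field_C; intros;
    [apply (ray_add_comm Th) | apply (ray_add_0_l Th) | apply (ray_add_opp_r Th)
    | apply (ray_add_mult_distr_l Th)]; auto.
Qed.

End RayTheorem.

(** * The real line *)

Lemma cunit_RtoC x : cunit (RtoC x) = RtoC (rsgn x).
Proof.
  unfold rsgn; destruct (Req_EM_T x 0) as [->|Hx].
  - apply cunit_0, Cmod_0.
  - rewrite cunit_eq, Cmod_R by (rewrite Cmod_R; apply Rabs_no_R0, Hx).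
    C_ext; unfold Rdiv; ring.
Qed.

Lemma RtoC_reps alpha x : RtoC (reps alpha x) = ceps (RtoC alpha) (RtoC x).
Proof.
  rewrite ceps_eq, Cmod_R, cunit_RtoC; unfold reps.
  destruct (Req_EM_T x 0) as [->|Hx].
  - unfold rsgn; destruct Req_EM_T; [ring | lra].
  - unfold cpowr, Rpower; rewrite <- RtoC_mult, cexpc_RtoC, <- RtoC_mult; f_equal; ring.
Qed.

Lemma RtoC_reps_inv alpha y :
  alpha <> 0 -> RtoC (reps_inv alpha y) = ceps_inv (RtoC alpha) (RtoC y).
Proof.
  intro Ha; rewrite ceps_inv_ceps_exponent.
  replace (ceps_inv_exponent (RtoC alpha)) with (RtoC (/ alpha))
    by (unfold ceps_inv_exponent, Re, Im; C_ext; field; exact Ha).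
  apply RtoC_reps.
Qed.

Lemma RtoC_reps_sum alpha (a : nat -> R) n : alpha <> 0 ->
  RtoC (reps_inv alpha (rsum (fun k => reps alpha (a k)) n)) =
  eps_sum (fun k => RtoC (a k)) n (RtoC alpha).
Proof.
  intro Ha; rewrite RtoC_reps_inv by exact Ha; unfold eps_sum; f_equal.
  rewrite RtoC_rsum; apply csum_ext_lt; intros; apply RtoC_reps.
Qed.

Lemma RtoC_reps_add alpha a b : alpha <> 0 ->
  RtoC (reps_inv alpha (reps alpha a + reps alpha b)) = ray_add_fun (RtoC a) (RtoC b) (RtoC alpha).
Proof.
  intro Ha; rewrite RtoC_reps_inv, RtoC_plus, !RtoC_reps by exact Ha; reflexivity.
Qed.

Lemma cS_RtoC (a : nat -> R) n k : cS (fun t => RtoC (a t)) n k = RtoC (rS a n k).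
Proof.
  unfold cS, rS; rewrite RtoC_rsum; apply csum_ext_lt; intros t _.
  rewrite !Cmod_R; destruct Req_EM_T; [apply cunit_RtoC | reflexivity].
Qed.

Lemma extr_idx_RtoC le (a : nat -> R) n M :
  extr_idx le (radm a n) (fun k => Rabs (a k)) n M <->
  extr_idx le (cadm (fun t => RtoC (a t)) n) (fun k => Cmod (RtoC (a k))) n M.
Proof.
  assert (Hadm : forall k, radm a n k <-> cadm (fun t => RtoC (a t)) n k).
  { intro k; unfold radm, cadm, cr, rr; rewrite cS_RtoC, Cmod_R.
    split; intros [H1 H2]; split; auto; intro E; apply H1.
    - apply RtoC_inj, E.
    - rewrite E; reflexivity. }
  unfold extr_idx; setoid_rewrite Cmod_R; setoid_rewrite Hadm; tauto.
Qed.

Lemma cvalue_RtoC Th (a : nat -> R) n M : tan Th = 0 ->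
  cvalue Th (fun t => RtoC (a t)) n M = RtoC (Rabs (a M) * rs a n M).
Proof.
  intro Ht; unfold cvalue, cr, cs, rs, cpowr.
  rewrite cS_RtoC, !Cmod_R, cunit_RtoC, Ht, RtoC_mult.
  replace (- (Ci * RtoC 0) * RtoC (ln (Rabs (rS a n M))))%C with (RtoC 0) by ring.
  rewrite cexpc_RtoC, exp_0; ring.
Qed.

Section RealAxis.
Variable Th : R.
Hypothesis sin_Th_0 : sin Th = 0.

Lemma cos_neq0_of_sin_0 : cos Th <> 0.
Proof. intro H; pose proof (sin2_cos2 Th); unfold Rsqr in *; rewrite H, sin_Th_0 in *; lra. Qed.

Lemma tan_of_sin_0 : tan Th = 0.
Proof. unfold tan; rewrite sin_Th_0; apply Rdiv_0_l. Qed.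

Lemma real_lim_of_clim (f : R -> R) (g : C -> C) L :
  (forall x, x <> 0 -> RtoC (f x) = g (RtoC x)) -> clim Th g L ->
  filterlim (fun rho => f (cos Th * rho)) (Rbar_locally p_infty) (locally (Re L)) /\ Im L = 0.
Proof.
  intros Hfg Hg; pose proof cos_neq0_of_sin_0 as Hc.
  assert (H : filterlim (fun rho => RtoC (f (cos Th * rho))) (Rbar_locally p_infty) (locally L)).
  { apply filterlim_ext_loc with (fun rho => g (ray Th rho)); [|exact Hg].
    exists 0; intros rho Hrho.
    rewrite Hfg, ray_eq, sin_Th_0 by (apply Rmult_integral_contrapositive; split; lra).
    f_equal; C_ext; ring. }
  split; [exact (filterlim_Re _ _ H)|].
  symmetry; apply (@filterlim_locally_unique _ R_AbsRing R_NormedModule (Rbar_locally p_infty)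
           (Proper_StrongProper _ (Rbar_locally_filter p_infty)) (fun _ => 0)).
  - apply filterlim_const.
  - exact (filterlim_Im _ _ H).
Qed.

Variable le : R -> R -> Prop.
Hypotheses (le_decay : decay_order Th le) (le_total_preorder : total_preorder le).

Lemma real_ray_addition :
  exists add : R -> R -> R,
    (forall a b, filterlim (fun rho => reps_inv (cos Th * rho)
                                         (reps (cos Th * rho) a + reps (cos Th * rho) b))
                   (Rbar_locally p_infty) (locally (add a b))) /\
    nonassoc_field add Rmult.
Proof.
  pose proof cos_neq0_of_sin_0 as Hc.
  destruct (complex_ray_theorem Th le Hc le_decay le_total_preorder) as [[addC [HaddC _]] _].
  assert (Hadd : forall a b,
    filterlim (fun rho => reps_inv (cos Th * rho) (reps (cos Th * rho) a + reps (cos Th * rho) b))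
      (Rbar_locally p_infty) (locally (Re (addC (RtoC a) (RtoC b)))) /\
    Im (addC (RtoC a) (RtoC b)) = 0).
  { intros a b.
    apply (real_lim_of_clim (fun alpha => reps_inv alpha (reps alpha a + reps alpha b))
             (ray_add_fun (RtoC a) (RtoC b))); auto.
    intros; apply RtoC_reps_add; auto. }
  exists (fun a b => Re (addC (RtoC a) (RtoC b))); split; [intros a b; apply Hadd|].
  apply (nonassoc_field_R_of_C addC).
  - intros a b; C_ext; [reflexivity | apply Hadd].
  - apply (ray_add_comm Th); auto.
  - apply (ray_add_0_l Th); auto.
  - apply (ray_add_opp_r Th); auto.
  - apply (ray_add_mult_distr_l Th); auto.
Qed.

Lemma real_ray_sum n (a : nat -> R) :
  (forall M, extr_idx le (radm a n) (fun k => Rabs (a k)) n M ->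
     filterlim (fun rho => reps_inv (cos Th * rho) (rsum (fun k => reps (cos Th * rho) (a k)) n))
       (Rbar_locally p_infty) (locally (Rabs (a M) * rs a n M))) /\
  ((~ exists M, extr_idx le (radm a n) (fun k => Rabs (a k)) n M) ->
     filterlim (fun rho => reps_inv (cos Th * rho) (rsum (fun k => reps (cos Th * rho) (a k)) n))
       (Rbar_locally p_infty) (locally 0)).
Proof.
  pose proof cos_neq0_of_sin_0 as Hc.
  destruct (complex_ray_theorem Th le Hc le_decay le_total_preorder) as [_ Hsum].
  destruct (Hsum n (fun k => RtoC (a k))) as [Hextr Hno].
  assert (Hreal := fun L => real_lim_of_clim
    (fun alpha => reps_inv alpha (rsum (fun k => reps alpha (a k)) n))
    (eps_sum (fun k => RtoC (a k)) n) L (fun x Hx => RtoC_reps_sum x a n Hx)).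
  split.
  - intros M HM.
    rewrite <- (re_RtoC (Rabs (a M) * rs a n M)), <- (cvalue_RtoC Th a n M) by apply tan_of_sin_0.
    apply Hreal, Hextr, extr_idx_RtoC, HM.
  - intros HN; rewrite <- (re_RtoC 0).
    apply Hreal, Hno; intros [M HM]; apply HN; exists M; apply extr_idx_RtoC, HM.
Qed.

End RealAxis.

Lemma real_ray_theorem (Th : R) (le : R -> R -> Prop) (G : (R -> Prop) -> Prop) :
  sin Th = 0 -> decay_order Th le -> total_preorder le ->
  (forall (f : R -> R) L,
     filterlim (fun rho => f (cos Th * rho)) (Rbar_locally p_infty) (locally L) ->
     filterlim f G (locally L)) ->
  (exists add : R -> R -> R,
     (forall a b, filterlim (fun alpha => reps_inv alpha (reps alpha a + reps alpha b))
                    G (locally (add a b))) /\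
     nonassoc_field add Rmult) /\
  (forall n (a : nat -> R),
     (forall M, extr_idx le (radm a n) (fun k => Rabs (a k)) n M ->
        filterlim (fun alpha => reps_inv alpha (rsum (fun k => reps alpha (a k)) n))
          G (locally (Rabs (a M) * rs a n M))) /\
     ((~ exists M, extr_idx le (radm a n) (fun k => Rabs (a k)) n M) ->
        filterlim (fun alpha => reps_inv alpha (rsum (fun k => reps alpha (a k)) n))
          G (locally 0))).
Proof.
  intros Hsin Hdec Hord HG; split.
  - destruct (real_ray_addition Th Hsin le Hdec Hord) as [add [Hadd Hfield]].
    exists add; split; [intros a b; apply HG, Hadd | exact Hfield].
  - intros n a; destruct (real_ray_sum Th Hsin le Hdec Hord n a) as [Hextr Hno].
    split; [intros M HM; apply HG, Hextr, HM | intros HN; apply HG, Hno, HN].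
Qed.

Lemma filterlim_p_infty_of_cos_0 (f : R -> R) L :
  filterlim (fun rho => f (cos 0 * rho)) (Rbar_locally p_infty) (locally L) ->
  filterlim f (Rbar_locally p_infty) (locally L).
Proof. rewrite cos_0; apply filterlim_ext; intro; rewrite Rmult_1_l; reflexivity. Qed.

Lemma filterlim_m_infty_of_cos_PI (f : R -> R) L :
  filterlim (fun rho => f (cos PI * rho)) (Rbar_locally p_infty) (locally L) ->
  filterlim f (Rbar_locally m_infty) (locally L).
Proof.
  rewrite cos_PI; intro H.
  apply filterlim_ext with (fun x => f (-1 * - x)); [intro; f_equal; ring|].
  exact (filterlim_comp _ _ _ Ropp (fun y => f (-1 * y)) _ _ _ (filterlim_Rbar_opp m_infty) H).
Qed.

Theorem mainTheorem5 :
  (* F = C, part (1): cos Theta > 0, |alpha| -> infinity along arg alpha = Theta *)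
  (forall Theta : R, 0 < cos Theta ->
     (exists add : C -> C -> C,
        (forall a b : C,
           clim Theta (fun alpha => ceps_inv alpha (ceps alpha a + ceps alpha b)%C) (add a b))
        /\ nonassoc_field add Cmult)
     /\
     (forall (n : nat) (a : nat -> C),
        (forall M : nat, extr_idx Rle (cadm a n) (fun k => Cmod (a k)) n M ->
           clim Theta (fun alpha => ceps_inv alpha (csum (fun k => ceps alpha (a k)) n))
                (cvalue Theta a n M))
        /\
        ((~ exists M : nat, extr_idx Rle (cadm a n) (fun k => Cmod (a k)) n M) ->
           clim Theta (fun alpha => ceps_inv alpha (csum (fun k => ceps alpha (a k)) n))
                (RtoC 0))))
  /\
  (* F = C, part (2): cos Theta < 0 *)
  (forall Theta : R, cos Theta < 0 ->
     (exists add : C -> C -> C,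
        (forall a b : C,
           clim Theta (fun alpha => ceps_inv alpha (ceps alpha a + ceps alpha b)%C) (add a b))
        /\ nonassoc_field add Cmult)
     /\
     (forall (n : nat) (a : nat -> C),
        (forall m : nat, extr_idx Rge (cadm a n) (fun k => Cmod (a k)) n m ->
           clim Theta (fun alpha => ceps_inv alpha (csum (fun k => ceps alpha (a k)) n))
                (cvalue Theta a n m))
        /\
        ((~ exists m : nat, extr_idx Rge (cadm a n) (fun k => Cmod (a k)) n m) ->
           clim Theta (fun alpha => ceps_inv alpha (csum (fun k => ceps alpha (a k)) n))
                (RtoC 0))))
  /\
  (* F = R, part (1): Theta = 0, alpha -> +infinity (r_M^{-i tan 0} = 1) *)
  ((exists add : R -> R -> R,
      (forall a b : R,
         filterlim (fun alpha => reps_inv alpha (reps alpha a + reps alpha b))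
           (Rbar_locally p_infty) (locally (add a b)))
      /\ nonassoc_field add Rmult)
   /\
   (forall (n : nat) (a : nat -> R),
      (forall M : nat, extr_idx Rle (radm a n) (fun k => Rabs (a k)) n M ->
         filterlim (fun alpha => reps_inv alpha (rsum (fun k => reps alpha (a k)) n))
           (Rbar_locally p_infty) (locally (Rabs (a M) * rs a n M)))
      /\
      ((~ exists M : nat, extr_idx Rle (radm a n) (fun k => Rabs (a k)) n M) ->
         filterlim (fun alpha => reps_inv alpha (rsum (fun k => reps alpha (a k)) n))
           (Rbar_locally p_infty) (locally 0))))
  /\
  (* F = R, part (2): Theta = pi, i.e. alpha -> -infinity (r_m^{-i tan pi} = 1) *)
  ((exists add : R -> R -> R,
      (forall a b : R,
         filterlim (fun alpha => reps_inv alpha (reps alpha a + reps alpha b))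
           (Rbar_locally m_infty) (locally (add a b)))
      /\ nonassoc_field add Rmult)
   /\
   (forall (n : nat) (a : nat -> R),
      (forall m : nat, extr_idx Rge (radm a n) (fun k => Rabs (a k)) n m ->
         filterlim (fun alpha => reps_inv alpha (rsum (fun k => reps alpha (a k)) n))
           (Rbar_locally m_infty) (locally (Rabs (a m) * rs a n m)))
      /\
      ((~ exists m : nat, extr_idx Rge (radm a n) (fun k => Rabs (a k)) n m) ->
         filterlim (fun alpha => reps_inv alpha (rsum (fun k => reps alpha (a k)) n))
           (Rbar_locally m_infty) (locally 0)))).
Proof.
  split; [|split; [|split]].
  - intros Th Hc; apply complex_ray_theorem;
      [lra | apply decay_order_Rle, Hc | apply total_preorder_Rle].
  - intros Th Hc; apply complex_ray_theorem;
      [lra | apply decay_order_Rge, Hc | apply total_preorder_Rge].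
  - apply (real_ray_theorem 0);
      [ apply sin_0 | apply decay_order_Rle; rewrite cos_0; lra | apply total_preorder_Rle
      | apply filterlim_p_infty_of_cos_0 ].
  - apply (real_ray_theorem PI);
      [ apply sin_PI | apply decay_order_Rge; rewrite cos_PI; lra | apply total_preorder_Rge
      | apply filterlim_m_infty_of_cos_PI ].
Qed.
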